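(* Let $k=2^{\ell}$ with $\ell\ge2$ an integer and $q=4k$. Let $f\in\mathbb F_q[X,Y]$ be a local permutation polynomial whose permutation polynomial tuple consists of the $q$ elements of the group $G_3=\{b^ja^i:0\le j\le 2k-1,\ 0\le i\le 1\}$ (in some order), where $a$ and $b$ are as defined below. Then $f$ has a companion.
   Context: The elements of $\mathbb F_q$ are enumerated as $\mathbb F_q=\{c_0,\dots,c_{q-1}\}$; $\mathfrak S_q$ is the symmetric group of permutations of $\mathbb F_q$, composed right to left, written in cycle notation. $a=(c_0,c_1)(c_2,c_3)\cdots(c_{q-2},c_{q-1})$ and $b=D_1D_2$, where $D_1$ is the $2k$-cycle whose entries in order are: for $i=0,1,\dots,\frac{k-2}{2}$ the pair $c_{2i},c_{2i+2k+1}$; then $c_{k+1},c_{3k}$; then for $j=0,1,\dots,\frac{k-4}{2}$ the pair $c_{k+2j+2},c_{3k+2j+2}$; and $D_2$ is the $2k$-cycle whose entries in order are: for $j=0,1,\dots,\frac{k-4}{2}$ the pair $c_{3k-2-2j},c_{2k-1-2j}$; then $c_{2k},c_k$; then for $i=0,1,\dots,\frac{k-2}{2}$ the pair $c_{4k-1-2i},c_{k-1-2i}$. ($G_3$ is a subgroup of $\mathfrak S_q$ of order $q$ whose non-identity elements have no fixed points.) Every function $\mathbb F_q^2\to\mathbb F_q$ is identified with the unique polynomial in $\mathbb F_q[X,Y]$ of degree $<q$ in each variable representing it. $f$ is a local permutation polynomial (LPP) if $x\mapsto f(x,y_0)$ and $y\mapsto f(x_0,y)$ are permutations of $\mathbb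 F_q$ for all $x_0,y_0$. A permutation polynomial tuple is $(\beta_0,\dots,\beta_{q-1})\in\mathfrak S_q^q$ such that $\beta_i^{-1}\beta_j$ has no fixed point whenever $i\ne j$; LPPs $f$ correspond bijectively to such tuples via $f(x,\beta_i(x))=c_i$ for all $x$ and all $i$. Two LPPs $f,g$ are orthogonal (companions) if for every $(u,v)\in\mathbb F_q^2$ the system $f(X,Y)=u$, $g(X,Y)=v$ has exactly one solution in $\mathbb F_q^2$; a companion of $f$ is an LPP orthogonal to $f$. *)

From mathcomp Require Import all_boot all_algebra all_field.
Set Implicit Arguments. Unset Strict Implicit. Unset Printing Implicit Defensive.

Definition cycf (F : eqType) (s : seq F) (x : F) : F :=
  if x \in s then nth x s ((index x s).+1 %% size s) else x.

Section Defs.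
Variables (F : finFieldType) (c : nat -> F) (k : nat).

(* a = (c_0,c_1)(c_2,c_3)...(c_{q-2},c_{q-1}), q = 4k *)
Definition perm_a (x : F) : F :=
  foldr (fun m y => cycf [:: c (2 * m); c (2 * m).+1] y) x (iota 0 (2 * k)).

Definition D1_list : seq F :=
  flatten [seq [:: c (2 * i); c (2 * i + 2 * k + 1)] | i <- iota 0 k./2]
  ++ [:: c k.+1; c (3 * k)]
  ++ flatten [seq [:: c (k + 2 * j + 2); c (3 * k + 2 * j + 2)] | j <- iota 0 (k./2 - 1)].

Definition D2_list : seq F :=
  flatten [seq [:: c (3 * k - 2 - 2 * j); c (2 * k - 1 - 2 * j)] | j <- iota 0 (k./2 - 1)]
  ++ [:: c (2 * k); c k]
  ++ flatten [seq [:: c (4 * k - 1 - 2 * i); c (k - 1 - 2 * i)] | i <- iota 0 k./2].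

Definition perm_b (x : F) : F := cycf D1_list (cycf D2_list x).

Definition G3_elt (j i : nat) (x : F) : F := iter j perm_b (iter i perm_a x).
End Defs.

Definition is_LPP (F : finFieldType) (f : F -> F -> F) : Prop :=
  (forall y0 : F, bijective (fun x => f x y0)) /\
  (forall x0 : F, bijective (fun y => f x0 y)).

Definition orthogonal (F : finFieldType) (f g : F -> F -> F) : Prop :=
  forall u v : F, exists! p : F * F, f p.1 p.2 = u /\ g p.1 p.2 = v.

Definition has_companion (F : finFieldType) (f : F -> F -> F) : Prop :=
  exists g : F -> F -> F, is_LPP g /\ orthogonal f g.

From mathcomp Require Import all_boot all_algebra all_field zify.
Set Implicit Arguments. Unset Strict Implicit. Unset Printing Implicit Defensive.

(* The rows of [f] are the maps [x |-> g x] for [g] in G3, and G3 acts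
   regularly on the field.  A companion is read off from a complete mapping
   [theta] of G3, i.e. a bijection such that [sigma : g |-> theta(g) g] is a
   bijection too: the companion sends [(x, g x)] to [sigma(g) x].  G3 is
   presented by [b^(2k) = a^2 = 1] and [a b = b^(k-1) a], and an explicit
   complete mapping is given on the normal forms [b^j a^e].  The relations
   themselves are checked on the two [2k]-cycles [D1], [D2] of [b], on which
   [b] shifts positions by one and [a] sends position [m] of one cycle to a
   position of the other that advances by [k - 1] when [m] advances by one. *)

Section Companion.
Variables (F : finFieldType) (L : finType) (act : L -> F -> F).
Hypotheses (act_inj : forall d, injective (act d))
  (act_reg : forall x d d', act d x = act d' x -> d = d')
  (card_L : #|L| = #|F|).
Variables (sigma theta : L -> L).
Hypotheses (sigma_inj : injective sigma) (theta_inj : injective theta)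
  (act_theta : forall d x, act (theta d) (act d x) = act (sigma d) x).

Lemma act_onto x y : exists d, act d x == y.
Proof.
have act_x_inj : injective (act^~ x) by move=> d d' /act_reg.
have /codomP [d ->] := inj_card_onto act_x_inj (eq_leq (esym card_L)) y.
by exists d.
Qed.

Definition label x y : L := xchoose (act_onto x y).

Lemma labelP x y : act (label x y) x = y.
Proof. exact/eqP/(xchooseP (act_onto x y)). Qed.

Lemma label_act d x : label x (act d x) = d.
Proof. by apply: (act_reg (x := x)); rewrite labelP. Qed.

Definition mate x y := act (sigma (label x y)) x.

Lemma mate_act d x : mate x (act d x) = act (sigma d) x.
Proof. by rewrite /mate label_act. Qed.

Lemma mateE x y : mate x y = act (theta (label x y)) y.
Proof. by rewrite /mate -act_theta labelP. Qed.

Lemma mate_is_LPP : is_LPP mate.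
Proof.
split=> [y | x]; apply: injF_bij.
- move=> x x'; rewrite !mateE => /act_reg /theta_inj eq_label.
  by apply: (act_inj (d := label x y)); rewrite {2}eq_label !labelP.
- move=> y y' /act_reg /sigma_inj eq_label.
  by rewrite -(labelP x y) -(labelP x y') eq_label.
Qed.

Lemma companion_of_complete_mapping (f : F -> F -> F) :
  (forall x, injective (f x)) ->
  (forall u, exists d, forall x, f x (act d x) = u) ->
  has_companion f.
Proof.
move=> f_inj f_levels; exists mate; split; first exact: mate_is_LPP.
move=> u v; have [d fd] := f_levels u.
have [inv act_invK actK] := injF_bij (@act_inj (sigma d)).
exists (inv v, act d (inv v)); split=> [|[x y] /= [fxy mxy]].
  by rewrite /= fd mate_act actK.
have y_eq : y = act d x by apply: (f_inj x); rewrite fxy fd.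
by rewrite {}y_eq in mxy *; rewrite -mxy mate_act act_invK.
Qed.
End Companion.

Lemma act_regular_of_tuple (T L : finType) (act : L -> T -> T) n
    (beta : 'I_n -> T -> T) :
  #|L| = n ->
  (forall i, exists d, beta i =1 act d) ->
  (forall x i i', beta i x = beta i' x -> i = i') ->
  forall x d d', act d x = act d' x -> d = d'.
Proof.
move=> card_L beta_act beta_reg x.
have lab_ex i : exists d, [forall y, act d y == beta i y].
  by have [d Hd] := beta_act i; exists d; apply/forallP => y; rewrite Hd.
pose s i := xchoose (lab_ex i).
have sP i y : act (s i) y = beta i y by apply/eqP/(forallP (xchooseP (lab_ex i))).
have s_inj : injective s.
  by move=> i i' eq_s; apply: (beta_reg x); rewrite -!sP eq_s.
have s_onto := inj_card_onto s_inj (eq_leq (etrans card_L (esym (card_ord n)))).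
move=> d d'; have /codomP [i ->] := s_onto d; have /codomP [i' ->] := s_onto d'.
by rewrite !sP => /beta_reg ->.
Qed.

Ltac case_parity x :=
  let H := fresh "Hodd" in
  have H := odd_double_half x; move: H; case: (odd x) => /= H.

Ltac case_lia :=
  repeat match goal with
  | |- context [odd ?x] => is_var x; case_parity x
  | |- context [if ?b then _ else _] =>
      lazymatch b with odd _ => fail | _ =>
      tryif (match b with context [if _ then _ else _] => idtac end) then fail
      else let H := fresh "Hif" in case H: b => /= end
  | |- context [odd ?x] => case_parity x
  end; try lia.

Lemma mod_lt_double x n : x < 2 * n -> x %% n = if x < n then x else x - n.
Proof.
move=> x_lt; case: ifP => [/modn_small //|/negbT]; rewrite -leqNgt => n_le.
by rewrite -{1}(subnK n_le) modnDr modn_small //; lia.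
Qed.

(* Coordinates [(j, e)] stand for [b^j a^e].  These define a complete mapping
   [cm] of G3 and its orthomorphism [orth d = cm d * d] (see [act_cm]). *)
Definition cm_j k j e :=
  if e == 0 then
    if odd j then (if j < k then 2*j else if 2*j <= 3*k+1 then 3*k+1-2*j else 5*k+1-2*j)
    else (if j < k then 2*j+1 else if j == k then 0 else 4*k-2*j)
  else
    if odd j then (if j < k then (if j == k-1 then 0 else 2*j+2)
                   else if 2*j <= 3*k+3 then 3*k+3-2*j else 5*k+3-2*j)
    else (if j < k then 2*j+3 else if 2*j <= 2*k+2 then 2*k+2-2*j else 4*k+2-2*j).
Definition cm_e k j := if j < k then 1 else 0.

Definition orth_j k j e :=
  if e == 0 then
    if odd j then (if j < k then j+k else if j == k+1 then 0 else 3*k+1-j)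
    else (if j < k then j+1 else 2*k-j)
  else
    if odd j then (if j < k then (if j+k+2 < 2*k then j+k+2 else j+2-k)
                   else if 3*k+3-j < 2*k then 3*k+3-j else k+3-j)
    else (if j < k then j+3 else 2*k+2-j).
Definition orth_e k j e := if e == 0 then (if j < k then 1 else 0) else (if j < k then 0 else 1).

(* [a b^j a = b^(twist k j)] *)
Definition twist k j :=
  if odd j then (if j <= k then k - j else 3*k - j) else (if j == 0 then 0 else 2*k - j).

Lemma cm_e_lt k j : cm_e k j < 2.
Proof. by rewrite /cm_e; case: ifP. Qed.
Lemma orth_e_lt k j e : orth_e k j e < 2.
Proof. by rewrite /orth_e; do 2 case: ifP. Qed.

Section CompleteMappingArith.
Variables (k h : nat) (Hk : k = 4 * h) (Hh : 0 < h).

Lemma cm_j_lt j e : j < 2*k -> cm_j k j e < 2*k.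
Proof. rewrite /cm_j => ?; case_lia. Qed.
Lemma orth_j_lt j e : j < 2*k -> orth_j k j e < 2*k.
Proof. rewrite /orth_j => ?; case_lia. Qed.

Lemma cm_coord_inj j e j' e' : j < 2*k -> j' < 2*k -> e < 2 -> e' < 2 ->
  cm_j k j e = cm_j k j' e' -> cm_e k j = cm_e k j' -> j = j' /\ e = e'.
Proof. by rewrite /cm_j /cm_e => ? ? ? ? E1 E2; split; move: E1 E2; case_lia. Qed.
Lemma orth_coord_inj j e j' e' : j < 2*k -> j' < 2*k -> e < 2 -> e' < 2 ->
  orth_j k j e = orth_j k j' e' -> orth_e k j e = orth_e k j' e' -> j = j' /\ e = e'.
Proof. by rewrite /orth_j /orth_e => ? ? ? ? E1 E2; split; move: E1 E2; case_lia. Qed.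

Lemma twistE j : j < 2*k -> ((k-1)*j) %% (2*k) = twist k j.
Proof.
move=> j_lt; have twist_lt : twist k j < 2*k by rewrite /twist; case_lia.
have [q ->] : exists q, (k-1)*j = q * (2*k) + twist k j.
  rewrite /twist; case_parity j; case: ifP => ?.
  - by exists j./2; rewrite -Hodd; nia.
  - by exists (j./2 - 1); rewrite -Hodd; nia.
  - by exists 0; rewrite (_ : j = 0) ?muln0 //; lia.
  - by exists (j./2 - 1); rewrite -Hodd; nia.
by rewrite modnMDl modn_small.
Qed.

Lemma orth_cm_e0 j e : j < 2*k -> e < 2 -> cm_e k j = 0 ->
  orth_e k j e = e /\ (cm_j k j e + j) %% (2*k) = orth_j k j e.
Proof.
move=> j_lt e_lt; rewrite mod_lt_double; last by have := cm_j_lt e j_lt; lia.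
rewrite /cm_e /orth_e /cm_j /orth_j; case_lia.
Qed.

Lemma orth_cm_e1 j e : j < 2*k -> e < 2 -> cm_e k j = 1 ->
  orth_e k j e = 1 - e /\ (cm_j k j e + twist k j) %% (2*k) = orth_j k j e.
Proof.
move=> j_lt e_lt; rewrite mod_lt_double; last first.
  have : twist k j < 2*k by rewrite /twist; case_lia.
  by have := cm_j_lt e j_lt; lia.
rewrite /cm_e /orth_e /cm_j /orth_j /twist; case_lia.
Qed.
End CompleteMappingArith.

Lemma iter_inj (T : Type) (f : T -> T) n : injective f -> injective (iter n f).
Proof. by move=> f_inj; elim: n => [|n IH] x y //= /f_inj /IH. Qed.

Definition lab k := ('I_(2 * k) * 'I_2)%type.

Lemma card_lab k : #|{: lab k}| = 4 * k.
Proof. by rewrite card_prod !card_ord; lia. Qed.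

Section CompleteMapping.
Variables (k h : nat) (Hk : k = 4 * h) (Hh : 0 < h).

Definition cm (d : lab k) : lab k :=
  (Ordinal (cm_j_lt Hk Hh d.2 (ltn_ord d.1)), Ordinal (cm_e_lt k d.1)).
Definition orth (d : lab k) : lab k :=
  (Ordinal (orth_j_lt Hk Hh d.2 (ltn_ord d.1)), Ordinal (orth_e_lt k d.1 d.2)).

Lemma cm_injective : injective cm.
Proof.
case=> j e [j' e'] [/= Ej Ee].
have [jj' ee'] := cm_coord_inj Hk Hh (ltn_ord j) (ltn_ord j') (ltn_ord e) (ltn_ord e') Ej Ee.
by congr (_, _); apply: val_inj.
Qed.

Lemma orth_injective : injective orth.
Proof.
case=> j e [j' e'] [/= Ej Ee].
have [jj' ee'] := orth_coord_inj Hk Hh (ltn_ord j) (ltn_ord j') (ltn_ord e) (ltn_ord e') Ej Ee.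
by congr (_, _); apply: val_inj.
Qed.

Variables (T : Type) (a b : T -> T).
Hypotheses (b_order : forall x, iter (2 * k) b x = x) (a_invol : involutive a)
  (a_b : forall x, a (b x) = iter (k - 1) b (a x)).

Definition act_lab (d : lab k) (x : T) := iter d.1 b (iter d.2 a x).

Lemma iter_b_mod j x : iter j b x = iter (j %% (2 * k)) b x.
Proof.
rewrite {1}(divn_eq j (2 * k)) iterD.
by elim: (j %/ (2 * k)) => [|q IH]; rewrite ?mul0n // mulSn iterD IH b_order.
Qed.

Lemma a_iter_b j x : a (iter j b x) = iter ((k - 1) * j) b (a x).
Proof. by elim: j => [|j IH]; rewrite ?muln0 // iterS a_b IH -iterD mulnS. Qed.

Lemma act_cm d x : act_lab (cm d) (act_lab d x) = act_lab (orth d) x.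
Proof.
case: d => [[j j_lt] [e e_lt]]; rewrite /act_lab /cm /orth /=.
have := cm_e_lt k j; case cm_eE: (cm_e k j) => [|[|//]] _ /=.
- have [-> <-] := orth_cm_e0 Hk Hh j_lt e_lt cm_eE.
  by rewrite -iterD -iter_b_mod.
- have [-> <-] := orth_cm_e1 Hk Hh j_lt e_lt cm_eE.
  rewrite a_iter_b -iterD [LHS]iter_b_mod -modnDmr (twistE Hk Hh j_lt).
  by case: e e_lt {cm_eE} => [|[|//]] _ //=; rewrite a_invol.
Qed.

Lemma act_lab_inj d : injective (act_lab d).
Proof.
have b_inj : injective b.
  move=> x y bxy; rewrite -(b_order x) -(b_order y).
  by rewrite (_ : 2 * k = (2 * k).-1.+1) ?iterSr ?bxy //; lia.
by move=> x y /(iter_inj b_inj) /(iter_inj (inv_inj a_invol)).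
Qed.
End CompleteMapping.

Lemma size_flatten_pairs (T : Type) (f g : nat -> T) (s : seq nat) :
  size (flatten [seq [:: f i; g i] | i <- s]) = 2 * size s.
Proof. by elim: s => //= x s ->; rewrite mulnS. Qed.

Lemma nth_flatten_pairs (T : Type) (x0 : T) (f g : nat -> T) s n m : m < 2 * n ->
  nth x0 (flatten [seq [:: f i; g i] | i <- iota s n]) m =
  if odd m then g (s + m./2) else f (s + m./2).
Proof.
elim: n s m => [|n IH] s [|[|m]] //= m_lt; rewrite ?addn0 // IH; last by lia.
by rewrite negbK addSnnS.
Qed.

Lemma cycf_pair (T : eqType) (u v z : T) : u != v ->
  cycf [:: u; v] z = if z == u then v else if z == v then u else z.
Proof.
move=> neq_uv; rewrite /cycf !inE.
case: (z =P u) => [->|_] /=; first by rewrite eqxx.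
by case: (z =P v) => [->|//] /=; rewrite (negbTE neq_uv) eqxx.
Qed.

Lemma cycf_nth (T : eqType) (s : seq T) x0 m : uniq s -> m < size s ->
  cycf s (nth x0 s m) = nth x0 s (m.+1 %% size s).
Proof.
move=> s_uniq m_lt; rewrite /cycf mem_nth // index_uniq //.
by apply: set_nth_default; rewrite ltn_pmod //; case: (size s) m_lt.
Qed.

Lemma cycf_nth_mod (T : eqType) (s : seq T) x0 n m : uniq s -> size s = n -> 0 < n ->
  cycf s (nth x0 s (m %% n)) = nth x0 s (m.+1 %% n).
Proof.
move=> s_uniq <- s_gt0; rewrite cycf_nth ?ltn_pmod //.
by rewrite -addn1 modnDml addn1.
Qed.

Lemma cycf_notin (T : eqType) (s : seq T) x : x \notin s -> cycf s x = x.
Proof. by rewrite /cycf => /negbTE ->. Qed.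

Definition D1_index k :=
  flatten [seq [:: 2*i; 2*i+2*k+1] | i <- iota 0 k./2]
  ++ [:: k.+1; 3*k]
  ++ flatten [seq [:: k+2*j+2; 3*k+2*j+2] | j <- iota 0 (k./2 - 1)].
Definition D2_index k :=
  flatten [seq [:: 3*k-2-2*j; 2*k-1-2*j] | j <- iota 0 (k./2 - 1)]
  ++ [:: 2*k; k]
  ++ flatten [seq [:: 4*k-1-2*i; k-1-2*i] | i <- iota 0 k./2].

Definition D1_at k m :=
  if m < k then (if odd m then m + 2*k else m)
  else if m == k then k+1 else if m == k+1 then 3*k
  else if odd m then m+2*k-1 else m.
Definition D2_at k m :=
  if m < k-2 then (if odd m then 2*k - m else 3*k-2-m)
  else if m == k-2 then 2*k else if m == k-1 then k
  else if odd m then 2*k - m else 5*k-1-m.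

Definition pair_swap n := if odd n then n.-1 else n.+1.

(* [perm_a] maps position [m] of [D1] to position [swap12 k m] of [D2] and
   position [m] of [D2] to position [swap21 k m] of [D1]. *)
Definition swap12 k m := if odd m then (if m < k then k-1-m else 3*k-1-m) else 2*k-1-m.
Definition swap21 k m := if odd m then 2*k-1-m else (if m < k then k-1-m else 3*k-1-m).

Lemma pair_swapK : involutive pair_swap.
Proof. by move=> n; rewrite /pair_swap; case_lia. Qed.

Lemma pair_swap_lt k n : n < 4 * k -> pair_swap n < 4 * k.
Proof. by rewrite /pair_swap => ?; case_lia. Qed.

Section CycleIndices.
Variables (k h : nat) (Hk : k = 4 * h) (Hh : 0 < h).

Let k_half : k./2 = 2 * h.
Proof. by rewrite Hk -[4]/(2 * 2) -mulnA mul2n doubleK. Qed.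

Lemma size_D1_index : size (D1_index k) = 2 * k.
Proof. by rewrite /D1_index !size_cat !size_flatten_pairs !size_iota k_half /=; lia. Qed.
Lemma size_D2_index : size (D2_index k) = 2 * k.
Proof. by rewrite /D2_index !size_cat !size_flatten_pairs !size_iota k_half /=; lia. Qed.

Lemma nth_D1_index m : m < 2*k -> nth 0 (D1_index k) m = D1_at k m.
Proof.
move=> m_lt; rewrite /D1_index nth_cat size_flatten_pairs size_iota k_half /D1_at.
case: ifP => m_lo.
  rewrite nth_flatten_pairs; last by lia.
  have -> : m < k by lia.
  case_lia.
rewrite nth_cat /=; case: ifP => m_mid.
  by case E: (m - 2 * (2 * h)) => [|[|n]] /=; case_lia.
rewrite nth_flatten_pairs; last by lia.
case_lia.
Qed.

Lemma nth_D2_index m : m < 2*k -> nth 0 (D2_index k) m = D2_at k m.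
Proof.
move=> m_lt; rewrite /D2_index nth_cat size_flatten_pairs size_iota k_half /D2_at.
case: ifP => m_lo.
  rewrite nth_flatten_pairs; last by lia.
  have -> : m < k - 2 by lia.
  case_lia.
rewrite nth_cat /=; case: ifP => m_mid.
  by case E: (m - 2 * (2 * h - 1)) => [|[|n]] /=; case_lia.
rewrite nth_flatten_pairs; last by lia.
case_lia.
Qed.

Lemma D1_at_lt m : m < 2*k -> D1_at k m < 4*k.
Proof. rewrite /D1_at => ?; case_lia. Qed.
Lemma D2_at_lt m : m < 2*k -> D2_at k m < 4*k.
Proof. rewrite /D2_at => ?; case_lia. Qed.
Lemma D1_at_inj m m' : m < 2*k -> m' < 2*k -> D1_at k m = D1_at k m' -> m = m'.
Proof. rewrite /D1_at => ? ?; case_lia. Qed.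
Lemma D2_at_inj m m' : m < 2*k -> m' < 2*k -> D2_at k m = D2_at k m' -> m = m'.
Proof. rewrite /D2_at => ? ?; case_lia. Qed.
Lemma D1_D2_at_neq m m' : m < 2*k -> m' < 2*k -> D1_at k m != D2_at k m'.
Proof. rewrite /D1_at /D2_at => ? ?; apply/eqP; case_lia. Qed.

Lemma swap12_lt m : m < 2*k -> swap12 k m < 2*k.
Proof. rewrite /swap12 => ?; case_lia. Qed.
Lemma swap21_lt m : m < 2*k -> swap21 k m < 2*k.
Proof. rewrite /swap21 => ?; case_lia. Qed.
Lemma pair_swap_D1 m : m < 2*k -> pair_swap (D1_at k m) = D2_at k (swap12 k m).
Proof. rewrite /pair_swap /D1_at /D2_at /swap12 => ?; case_lia. Qed.
Lemma pair_swap_D2 m : m < 2*k -> pair_swap (D2_at k m) = D1_at k (swap21 k m).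
Proof. rewrite /pair_swap /D1_at /D2_at /swap21 => ?; case_lia. Qed.

Lemma swap12S m : m < 2*k -> swap12 k (m.+1 %% (2*k)) = (swap12 k m + (k - 1)) %% (2*k).
Proof. by move=> m_lt; rewrite !mod_lt_double /swap12; case_lia. Qed.
Lemma swap21S m : m < 2*k -> swap21 k (m.+1 %% (2*k)) = (swap21 k m + (k - 1)) %% (2*k).
Proof. by move=> m_lt; rewrite !mod_lt_double /swap21; case_lia. Qed.

Lemma nth_D12_index i : i < 4 * k ->
  nth 0 (D1_index k ++ D2_index k) i = if i < 2 * k then D1_at k i else D2_at k (i - 2 * k).
Proof.
move=> i_lt; rewrite nth_cat size_D1_index.
by case: ifP => ?; rewrite ?nth_D1_index ?nth_D2_index //; lia.
Qed.

Lemma D12_index_lt n : n \in D1_index k ++ D2_index k -> n < 4 * k.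
Proof.
case/(nthP 0) => i; rewrite size_cat size_D1_index size_D2_index => i_lt <-.
by rewrite nth_D12_index; [case: ifP => ?; [apply: D1_at_lt | apply: D2_at_lt] | ]; lia.
Qed.

Lemma uniq_D12_index : uniq (D1_index k ++ D2_index k).
Proof.
apply/(uniqP 0) => i j; rewrite !inE size_cat size_D1_index size_D2_index.
move=> i_lt j_lt; rewrite !nth_D12_index; try lia.
case: ifP => ?; case: ifP => ? E.
- by apply: D1_at_inj; lia.
- by move/eqP: E; rewrite (negbTE (D1_D2_at_neq _ _)) //; lia.
- by move/eqP: E; rewrite eq_sym (negbTE (D1_D2_at_neq _ _)) //; lia.
- by have := D2_at_inj _ _ E; lia.
Qed.

Lemma mem_D12_index n : n < 4 * k -> n \in D1_index k ++ D2_index k.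
Proof.
move=> n_lt; have sub_iota : {subset D1_index k ++ D2_index k <= iota 0 (4 * k)}.
  by move=> m /D12_index_lt m_lt; rewrite mem_iota.
have size_iota_le : size (iota 0 (4 * k)) <= size (D1_index k ++ D2_index k).
  by rewrite size_iota size_cat size_D1_index size_D2_index; lia.
by rewrite ((uniq_min_size uniq_D12_index sub_iota size_iota_le).2) mem_iota.
Qed.
End CycleIndices.

Section ConcreteGenerators.
Variables (F : finFieldType) (c : nat -> F) (k h : nat).
Hypotheses (Hk : k = 4 * h) (Hh : 0 < h).
Hypothesis c_inj : forall m n, m < 4 * k -> n < 4 * k -> c m = c n -> m = n.
Hypothesis c_surj : forall x : F, exists2 n, n < 4 * k & c n = x.

Let k2_gt0 : 0 < 2 * k. Proof. lia. Qed.

Lemma D1_listE : D1_list c k = map c (D1_index k).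
Proof. by rewrite /D1_list /D1_index !map_cat !map_flatten -!map_comp. Qed.
Lemma D2_listE : D2_list c k = map c (D2_index k).
Proof. by rewrite /D2_list /D2_index !map_cat !map_flatten -!map_comp. Qed.

Lemma size_D1_list : size (D1_list c k) = 2 * k.
Proof. by rewrite D1_listE size_map (size_D1_index Hk Hh). Qed.
Lemma size_D2_list : size (D2_list c k) = 2 * k.
Proof. by rewrite D2_listE size_map (size_D2_index Hk Hh). Qed.

Lemma uniq_D12_list : uniq (D1_list c k ++ D2_list c k).
Proof.
rewrite D1_listE D2_listE -map_cat map_inj_in_uniq ?(uniq_D12_index Hk Hh) //.
by move=> m n /(D12_index_lt Hk Hh) m_lt /(D12_index_lt Hk Hh); apply: c_inj.
Qed.

Definition cyc (t : bool) m := nth (c 0) (if t then D2_list c k else D1_list c k) (m %% (2 * k)).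

Lemma cycE t m :
  cyc t m = c (if t then D2_at k (m %% (2 * k)) else D1_at k (m %% (2 * k))).
Proof.
have m_lt : m %% (2 * k) < 2 * k by rewrite ltn_pmod.
rewrite /cyc D1_listE D2_listE -fun_if; case: t; rewrite (nth_map 0).
- by rewrite (nth_D2_index Hk Hh).
- by rewrite (size_D2_index Hk Hh).
- by rewrite (nth_D1_index Hk Hh).
- by rewrite (size_D1_index Hk Hh).
Qed.

Lemma cyc_mod t m : cyc t (m %% (2 * k)) = cyc t m.
Proof. by rewrite /cyc modn_mod. Qed.

Lemma cyc_surj x : exists t m, x = cyc t m.
Proof.
have [n n_lt <-] := c_surj x.
have := mem_D12_index Hk Hh n_lt; rewrite mem_cat => /orP [] /(nthP 0) [m].
- rewrite (size_D1_index Hk Hh) => m_lt <-.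
  by exists false, m; rewrite cycE modn_small // (nth_D1_index Hk Hh).
- rewrite (size_D2_index Hk Hh) => m_lt <-.
  by exists true, m; rewrite cycE modn_small // (nth_D2_index Hk Hh).
Qed.

Lemma perm_b_cyc t m : perm_b c k (cyc t m) = cyc t m.+1.
Proof.
have := uniq_D12_list; rewrite cat_uniq => /and3P [uniq1 /hasPn disj uniq2].
have notin21 y : y \in D1_list c k -> y \notin D2_list c k.
  by move=> y1; apply/negP => y2; have := disj y y2; rewrite y1.
have nth_in t' m' : nth (c 0) (if t' then D2_list c k else D1_list c k) (m' %% (2 * k))
    \in (if t' then D2_list c k else D1_list c k).
  by case: t'; rewrite mem_nth ?size_D1_list ?size_D2_list ?ltn_pmod.
rewrite /perm_b /cyc; case: t.
- rewrite (cycf_nth_mod _ _ uniq2 size_D2_list) // cycf_notin //.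
  exact: disj _ (nth_in true m.+1).
- rewrite (cycf_notin (notin21 _ (nth_in false m))).
  exact: cycf_nth_mod uniq1 size_D1_list _.
Qed.

Lemma iter_perm_b_cyc t m j : iter j (perm_b c k) (cyc t m) = cyc t (m + j).
Proof. by elim: j => [|j IH]; rewrite ?addn0 // iterS IH perm_b_cyc addnS. Qed.

Lemma perm_b_order x : iter (2 * k) (perm_b c k) x = x.
Proof. by have [t [m ->]] := cyc_surj x; rewrite iter_perm_b_cyc -cyc_mod modnDr cyc_mod. Qed.

Let eq_c m n : m < 4 * k -> n < 4 * k -> (c m == c n) = (m == n).
Proof. by move=> m_lt n_lt; apply/eqP/eqP => [/c_inj|->]; auto. Qed.

Lemma foldr_pair_swaps s len n : n < 4 * k -> s + len <= 2 * k ->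
  foldr (fun m y => cycf [:: c (2 * m); c (2 * m).+1] y) (c n) (iota s len)
  = c (if s <= n./2 < s + len then pair_swap n else n).
Proof.
move=> n_lt; elim: len s => [|len IH] s len_le.
  by rewrite addn0; case: (leqP s n./2) => //= ?; rewrite ltnNge.
rewrite /= IH; last by lia.
have swap_lt : (if s.+1 <= n./2 < s.+1 + len then pair_swap n else n) < 4 * k.
  by case: ifP => _ //; apply: pair_swap_lt.
rewrite cycf_pair ?eq_c ?swap_lt //; try lia.
by rewrite -!fun_if /pair_swap; congr c; case_lia.
Qed.

Lemma perm_a_c n : n < 4 * k -> perm_a c k (c n) = c (pair_swap n).
Proof.
move=> n_lt; rewrite /perm_a foldr_pair_swaps //.
by have -> : 0 <= n./2 < 0 + 2 * k by lia.
Qed.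

Lemma perm_a_invol : involutive (perm_a c k).
Proof.
move=> x; have [n n_lt <-] := c_surj x.
by rewrite !perm_a_c ?pair_swapK ?pair_swap_lt.
Qed.

Lemma perm_a_cyc t m : perm_a c k (cyc t m) =
  cyc (~~ t) (if t then swap21 k (m %% (2 * k)) else swap12 k (m %% (2 * k))).
Proof.
have m_lt : m %% (2 * k) < 2 * k by rewrite ltn_pmod.
rewrite !cycE perm_a_c; case: t => /=.
- by rewrite (pair_swap_D2 Hk Hh) // (modn_small (swap21_lt Hk Hh m_lt)).
- by rewrite (pair_swap_D1 Hk Hh) // (modn_small (swap12_lt Hk Hh m_lt)).
- exact: (D2_at_lt Hk Hh).
- exact: (D1_at_lt Hk Hh).
Qed.

Lemma perm_a_b x : perm_a c k (perm_b c k x) = iter (k - 1) (perm_b c k) (perm_a c k x).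
Proof.
have m_lt m : m %% (2 * k) < 2 * k by rewrite ltn_pmod.
have [t [m ->]] := cyc_surj x.
rewrite perm_b_cyc !perm_a_cyc iter_perm_b_cyc -[RHS]cyc_mod -[m.+1]addn1 -modnDml addn1.
by case: t; rewrite ?(swap21S Hk Hh (m_lt m)) ?(swap12S Hk Hh (m_lt m)).
Qed.
End ConcreteGenerators.

Theorem theorem4p10
  (l : nat) (hl : 2 <= l)
  (F : finFieldType) (hF : #|F| = 4 * 2 ^ l)
  (c : nat -> F)
  (c_inj : forall m n, m < 4 * 2 ^ l -> n < 4 * 2 ^ l -> c m = c n -> m = n)
  (c_surj : forall x : F, exists2 n, n < 4 * 2 ^ l & c n = x)
  (f : F -> F -> F) (hf : is_LPP f)
  (beta : nat -> F -> F)
  (hbeta_f : forall i x, i < 4 * 2 ^ l -> f x (beta i x) = c i)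
  (hbeta_inj : forall i i', i < 4 * 2 ^ l -> i' < 4 * 2 ^ l ->
      (forall x, beta i x = beta i' x) -> i = i')
  (hbeta_G3 : forall i, i < 4 * 2 ^ l ->
      exists j, exists e, [/\ j < 2 * 2 ^ l, e < 2 &
        forall x, beta i x = G3_elt c (2 ^ l) j e x])
  (hG3_beta : forall j e, j < 2 * 2 ^ l -> e < 2 ->
      exists2 i, i < 4 * 2 ^ l & forall x, beta i x = G3_elt c (2 ^ l) j e x) :
  has_companion f.
Proof.
set k := 2 ^ l in hF c_inj c_surj hbeta_f hbeta_G3 *.
have Hk : k = 4 * 2 ^ (l - 2) by rewrite /k -{1}(subnKC hl) expnD.
have Hh : 0 < 2 ^ (l - 2) by rewrite expn_gt0.
have b_order := perm_b_order Hk Hh c_inj c_surj.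
have a_invol := perm_a_invol Hk Hh c_inj c_surj.
have a_b := perm_a_b Hk Hh c_inj c_surj.
have beta_G3 i : i < 4 * k ->
    exists d : lab k, forall x, beta i x = act_lab (perm_a c k) (perm_b c k) d x.
  move=> /hbeta_G3 [j [e [j_lt e_lt beta_i]]].
  by exists (Ordinal j_lt, Ordinal e_lt); exact: beta_i.
have beta_reg x (i i' : 'I_(4 * k)) : beta i x = beta i' x -> i = i'.
  by move=> /(congr1 (f x)); rewrite !hbeta_f // => /c_inj eq_c; apply/ord_inj/eq_c.
have act_reg := act_regular_of_tuple (act := act_lab (perm_a c k) (perm_b c k))
  (card_lab k) (fun i => beta_G3 i (ltn_ord i)) beta_reg.
apply: (companion_of_complete_mapping (act_lab_inj Hk Hh b_order a_invol) act_reg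
  (etrans (card_lab k) (esym hF)) (@orth_injective _ _ Hk Hh) (@cm_injective _ _ Hk Hh)
  (act_cm Hk Hh b_order a_invol a_b)).
- by move=> x; have [_ /(_ x) /bij_inj] := hf.
- move=> u; have [n n_lt <-] := c_surj u.
  by have [d beta_n] := beta_G3 n n_lt; exists d => x; rewrite -beta_n hbeta_f.
Qed.
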